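(* Let $(\alpha,\beta,\gamma,\delta)\in\mathbb{C}^4$ with $\gamma\neq0$ or $\delta\neq0$. The quartic surface $\mathrm{Q}(\alpha,\beta,\gamma,\delta)\subset\mathbb{P}^3(x,y,z,w)$, $y^2zw-4x^3z+3\alpha xzw^2+\beta zw^3+\gamma xz^2w-\tfrac12(\delta z^2w^2+w^4)=0$, has a singular point other than $[0,1,0,0]$ and $[0,0,1,0]$ if and only if $\mathcal{D}_4(\alpha,\beta,\gamma,\delta)=0$, where $$\begin{aligned}\mathcal{D}_4=\;&-2^53^6\alpha^6\beta\gamma^3+2^63^6\alpha^3\beta^3\gamma^3-2^53^6\beta^5\gamma^3-2^43^5\alpha^5\gamma^4+2^43^55^2\alpha^2\beta^2\gamma^4+2\cdot3^35^4\alpha\beta\gamma^5+5^5\gamma^6\\&-2^43^7\alpha^7\gamma^2\delta+2^53^7\alpha^4\beta^2\gamma^2\delta-2^43^7\alpha\beta^4\gamma^2\delta+2^33^5\cdot5\cdot19\,\alpha^3\beta\gamma^3\delta+2^33^55^2\beta^3\gamma^3\delta+3^35^3\cdot11\,\alpha^2\gamma^4\delta\\&+2^33^5\cdot37\,\alpha^4\gamma^2\delta^2+2^33^5\cdot5\cdot7\,\alpha\beta^2\gamma^2\delta^2-2^33^35^3\beta\gamma^3\delta^2+2^43^6\alpha^6\delta^3-2^53^6\alpha^3\beta^2\delta^3+2^43^6\beta^4\delta^3\\&-2^63^6\alpha^2\beta\gamma\delta^3-2^33^55^2\alpha\gamma^2\delta^3-2^53^6\alpha^3\delta^4-2^53^6\beta^2\delta^4+2^43^6\delta^5.\end{aligned}$$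 *)

(* The base field C is an arbitrary numClosedFieldType
   (algebraically closed, characteristic 0, with conjugation); the complex
   numbers are the intended instance. *)
From HB Require Import structures.
From mathcomp Require Import all_boot all_order all_algebra.
Set Implicit Arguments. Unset Strict Implicit. Unset Printing Implicit Defensive.
Import Order.TTheory GRing.Theory Num.Theory.
Local Open Scope ring_scope.

(* The quartic form Q(a,b,c,d) evaluated at polynomial arguments
   (used to take partial derivatives by substituting 'X in one coordinate):
   y^2 z w - 4 x^3 z + 3a x z w^2 + b z w^3 + c x z^2 w - 1/2 (d z^2 w^2 + w^4). *)
Definition quarticP (C : fieldType) (a b c d : C) (x y z w : {poly C}) : {poly C} :=
  y ^+ 2 * z * w - 4%:R%:P * x ^+ 3 * z + (3%:R * a)%:P * x * z * w ^+ 2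
  + b%:P * z * w ^+ 3 + c%:P * x * z ^+ 2 * w
  - (2%:R^-1)%:P * (d%:P * z ^+ 2 * w ^+ 2 + w ^+ 4).

Definition quartic (C : fieldType) (a b c d x y z w : C) : C :=
  (quarticP a b c d 'X y%:P z%:P w%:P).[x].

Definition dQx (C : fieldType) (a b c d x y z w : C) : C :=
  (quarticP a b c d 'X y%:P z%:P w%:P)^`().[x].
Definition dQy (C : fieldType) (a b c d x y z w : C) : C :=
  (quarticP a b c d x%:P 'X z%:P w%:P)^`().[y].
Definition dQz (C : fieldType) (a b c d x y z w : C) : C :=
  (quarticP a b c d x%:P y%:P 'X w%:P)^`().[z].
Definition dQw (C : fieldType) (a b c d x y z w : C) : C :=
  (quarticP a b c d x%:P y%:P z%:P 'X)^`().[w].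

Definition singular_rep (C : fieldType) (a b c d x y z w : C) : Prop :=
  ~ (x = 0 /\ y = 0 /\ z = 0 /\ w = 0) /\
  quartic a b c d x y z w = 0 /\
  dQx a b c d x y z w = 0 /\ dQy a b c d x y z w = 0 /\
  dQz a b c d x y z w = 0 /\ dQw a b c d x y z w = 0.

(* [x,y,z,w] = [0,1,0,0] in P^3 iff x = z = w = 0 (for a nonzero vector) *)
Definition is_P0100 (C : fieldType) (x y z w : C) : Prop :=
  x = 0 /\ z = 0 /\ w = 0.
(* [x,y,z,w] = [0,0,1,0] in P^3 iff x = y = w = 0 *)
Definition is_P0010 (C : fieldType) (x y z w : C) : Prop :=
  x = 0 /\ y = 0 /\ w = 0.

Definition D4 (C : fieldType) (a b c d : C) : C :=
  - (2^5 * 3^6)%N%:R * a^+6 * b * c^+3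
  + (2^6 * 3^6)%N%:R * a^+3 * b^+3 * c^+3
  - (2^5 * 3^6)%N%:R * b^+5 * c^+3
  - (2^4 * 3^5)%N%:R * a^+5 * c^+4
  + (2^4 * 3^5 * 5^2)%N%:R * a^+2 * b^+2 * c^+4
  + (2 * 3^3 * 5^4)%N%:R * a * b * c^+5
  + (5^5)%N%:R * c^+6
  - (2^4 * 3^7)%N%:R * a^+7 * c^+2 * d
  + (2^5 * 3^7)%N%:R * a^+4 * b^+2 * c^+2 * d
  - (2^4 * 3^7)%N%:R * a * b^+4 * c^+2 * d
  + (2^3 * 3^5 * 5 * 19)%N%:R * a^+3 * b * c^+3 * d
  + (2^3 * 3^5 * 5^2)%N%:R * b^+3 * c^+3 * d
  + (3^3 * 5^3 * 11)%N%:R * a^+2 * c^+4 * d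
  + (2^3 * 3^5 * 37)%N%:R * a^+4 * c^+2 * d^+2
  + (2^3 * 3^5 * 5 * 7)%N%:R * a * b^+2 * c^+2 * d^+2
  - (2^3 * 3^3 * 5^3)%N%:R * b * c^+3 * d^+2
  + (2^4 * 3^6)%N%:R * a^+6 * d^+3
  - (2^5 * 3^6)%N%:R * a^+3 * b^+2 * d^+3
  + (2^4 * 3^6)%N%:R * b^+4 * d^+3
  - (2^6 * 3^6)%N%:R * a^+2 * b * c * d^+3
  - (2^3 * 3^5 * 5^2)%N%:R * a * c^+2 * d^+3
  - (2^5 * 3^6)%N%:R * a^+3 * d^+4
  - (2^5 * 3^6)%N%:R * b^+2 * d^+4
  + (2^4 * 3^6)%N%:R * d^+5.

(* A singular point must have y = 0 and z w <> 0 unless it is one of the two excluded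
   points (w = 0 forces x = 0 and y z = 0, and z = 0 forces w = 0), so it lies in the chart
   w = 1, y = 0, where it is a common zero (X, Z) of dQx, dQz and dQw.  If c <> 0, dQx = 0
   means c Z = 12 X^2 - 3 a, and eliminating Z leaves a cubic and a quintic in X; writing the
   coefficients of the cubic through its roots, 3125 times the product of the quintic over
   these roots equals -8 D4, so a common root exists iff D4 = 0.  If c = 0 (hence d <> 0),
   the system says a = 4 X^2 and (8 X^3 + b)^2 = d, and D4 (4 e^2) b 0 d factors as
   2^4 3^6 d^3 ((8 e^3 + b)^2 - d) ((b - 8 e^3)^2 - d). *)

From HB Require Import structures.
From mathcomp Require Import all_boot all_order all_algebra.
From mathcomp Require Import ring.
Set Implicit Arguments. Unset Strict Implicit. Unset Printing Implicit Defensive.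
Import Order.TTheory GRing.Theory Num.Theory.
Local Open Scope ring_scope.

Lemma natr_neq0 {R : numDomainType} n : n.+1%:R != 0 :> R.
Proof. by rewrite pnatr_eq0. Qed.

Lemma eq_lincomb1 (R : idomainType) (k l r k1 p1 q1 : R) : k != 0 -> p1 = q1 ->
  k * (l - r) = k1 * (p1 - q1) -> l = r.
Proof.
move=> k_neq0 -> /eqP; rewrite subrr mulr0 mulf_eq0 (negbTE k_neq0) subr_eq0.
exact: eqP.
Qed.

Lemma eq_lincomb2 (R : idomainType) (k l r k1 p1 q1 k2 p2 q2 : R) :
  k != 0 -> p1 = q1 -> p2 = q2 ->
  k * (l - r) = k1 * (p1 - q1) + k2 * (p2 - q2) -> l = r.
Proof. by move=> k_neq0 -> ->; rewrite subrr mulr0 add0r; apply: eq_lincomb1. Qed.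

Lemma eq_lincomb3 (R : idomainType) (k l r k1 p1 q1 k2 p2 q2 k3 p3 q3 : R) :
  k != 0 -> p1 = q1 -> p2 = q2 -> p3 = q3 ->
  k * (l - r) = k1 * (p1 - q1) + k2 * (p2 - q2) + k3 * (p3 - q3) -> l = r.
Proof. by move=> k_neq0 -> ->; rewrite !subrr !mulr0 !add0r; apply: eq_lincomb1. Qed.

Section QuarticSurface.
Variable C : numFieldType.
Variables a b c d : C.

Lemma dQxE x y z w :
  dQx a b c d x y z w = - (12%:R * x ^+ 2 * z) + 3%:R * a * z * w ^+ 2 + c * z ^+ 2 * w.
Proof. by rewrite /dQx /quarticP !derivE !hornerE /=; ring. Qed.

Lemma dQyE x y z w : dQy a b c d x y z w = 2%:R * y * z * w.
Proof. by rewrite /dQy /quarticP !derivE !hornerE /=; ring. Qed.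

Lemma dQzE x y z w :
  dQz a b c d x y z w = y ^+ 2 * w - 4%:R * x ^+ 3 + 3%:R * a * x * w ^+ 2 + b * w ^+ 3
    + 2%:R * c * x * z * w - d * z * w ^+ 2.
Proof. by rewrite /dQz /quarticP !derivE !hornerE /=; field. Qed.

Lemma dQwE x y z w :
  dQw a b c d x y z w = y ^+ 2 * z + 6%:R * a * x * z * w + 3%:R * b * z * w ^+ 2
    + c * x * z ^+ 2 - d * z ^+ 2 * w - 2%:R * w ^+ 3.
Proof. by rewrite /dQw /quarticP !derivE !hornerE /=; field. Qed.

Lemma quartic_Euler x y z w :
  4%:R * quartic a b c d x y z w =
  x * dQx a b c d x y z w + y * dQy a b c d x y z w
  + z * dQz a b c d x y z w + w * dQw a b c d x y z w.
Proof. by rewrite dQxE dQyE dQzE dQwE /quartic /quarticP !hornerE /=; field. Qed.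

Definition chart_singular X Z :=
  [/\ dQx a b c d X 0 Z 1 = 0, dQz a b c d X 0 Z 1 = 0 & dQw a b c d X 0 Z 1 = 0].

Lemma singular_rep_chart x y z w : singular_rep a b c d x y z w ->
  ~ is_P0100 x y z w -> ~ is_P0010 x y z w -> exists X Z, chart_singular X Z.
Proof.
case=> _ [_]; rewrite dQxE dQyE dQzE dQwE => -[hx [hy [hz hw]]] not_P0100 not_P0010.
have w_neq0 : w != 0.
  apply/eqP => w0; subst w.
  have : x ^+ 3 = 0.
    by apply: (eq_lincomb1 (k := 4%:R) (k1 := -1) (natr_neq0 3) hz); ring.
  move/eqP; rewrite expf_eq0 /= => /eqP x0.
  have : y ^+ 2 * z = 0 by rewrite -hw x0; ring.
  move/eqP; rewrite mulf_eq0 expf_eq0 /= => /orP[] /eqP.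
    by move=> y0; apply: not_P0010.
  by move=> z0; apply: not_P0100.
have z_neq0 : z != 0.
  apply/eqP => z0.
  have : w ^+ 3 = 0.
    by apply: (eq_lincomb1 (k := 2%:R) (k1 := -1) (natr_neq0 1) hw); rewrite z0; ring.
  by move/eqP; rewrite expf_eq0 (negbTE w_neq0) andbF.
have y0 : y = 0.
  move/eqP: hy; rewrite !mulf_eq0 (negbTE z_neq0) (negbTE w_neq0) (negbTE (natr_neq0 1)).
  by rewrite /= !orbF => /eqP.
have [X [Z [eX eZ]]] : exists X Z, x = X * w /\ z = Z * w.
  by exists (x / w), (z / w); rewrite !divfK.
rewrite {}eX {}eZ {}y0 in hx hz hw.
have w3_neq0 : w ^+ 3 != 0 by rewrite expf_neq0.
exists X, Z; rewrite /chart_singular dQxE dQzE dQwE; split.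
- by apply: (eq_lincomb1 (k := w ^+ 3) (k1 := 1) w3_neq0 hx); ring.
- by apply: (eq_lincomb1 (k := w ^+ 3) (k1 := 1) w3_neq0 hz); ring.
- by apply: (eq_lincomb1 (k := w ^+ 3) (k1 := 1) w3_neq0 hw); ring.
Qed.

Lemma chart_singular_rep X Z : chart_singular X Z ->
  [/\ singular_rep a b c d X 0 Z 1, ~ is_P0100 X 0 Z 1 & ~ is_P0010 X 0 Z 1].
Proof.
case=> hx hz hw.
have one_neq0 : (1 : C) <> 0 by apply/eqP; rewrite oner_eq0.
have hy : dQy a b c d X 0 Z 1 = 0 by rewrite dQyE; ring.
have hq : quartic a b c d X 0 Z 1 = 0.
  move/eqP: (quartic_Euler X 0 Z 1); rewrite hx hy hz hw !mulr0 !addr0.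
  by rewrite mulf_eq0 (negbTE (natr_neq0 3)) => /eqP.
split; [|by case=> _ [_ /one_neq0]..].
by split; [case=> _ [_ [_ /one_neq0]] | do !split].
Qed.

Lemma singular_off_special_iff_chart :
  (exists x y z w, singular_rep a b c d x y z w /\ ~ is_P0100 x y z w /\ ~ is_P0010 x y z w)
  <-> exists X Z, chart_singular X Z.
Proof.
split=> [[x [y [z [w [sing [not_P0100 not_P0010]]]]]] | [X [Z chart]]].
  exact: singular_rep_chart sing not_P0100 not_P0010.
by exists X, 0, Z, 1; case: (chart_singular_rep chart).
Qed.

Lemma chart_Z_neq0 X Z : dQw a b c d X 0 Z 1 = 0 -> Z != 0.
Proof.
move=> hw; apply/eqP => Z0.
have : 2%:R = 0 :> C.
  by apply: (eq_lincomb1 (k := 1) (k1 := -1) (oner_neq0 _) hw); rewrite dQwE Z0; ring.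
by move/eqP; rewrite (negbTE (natr_neq0 1)).
Qed.

(* c dQz and c^2 dQw in the chart, after substituting c Z = 12 X^2 - 3 a (that is dQx = 0
   divided by Z). *)
Definition elim_cubic X :=
  20%:R * c * X ^+ 3 - 12%:R * d * X ^+ 2 - 3%:R * a * c * X + (b * c + 3%:R * a * d).

Definition elim_quintic X :=
  (12%:R * X ^+ 2 - 3%:R * a) * (6%:R * a * c * X + 3%:R * b * c
     + c * X * (12%:R * X ^+ 2 - 3%:R * a) - d * (12%:R * X ^+ 2 - 3%:R * a))
  - 2%:R * c ^+ 2.

Lemma chart_singular_elim : c != 0 ->
  (exists X Z, chart_singular X Z) <-> exists X, elim_cubic X = 0 /\ elim_quintic X = 0.
Proof.
move=> c_neq0; split.
- case=> X [Z [hx hz hw]].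
  have hT : c * Z = 12%:R * X ^+ 2 - 3%:R * a.
    by apply: (eq_lincomb1 (k := Z) (k1 := 1) (chart_Z_neq0 hw) hx); rewrite dQxE; ring.
  exists X; split.
    apply: (eq_lincomb2 (k := 1) (k1 := c) (k2 := - (2%:R * c * X - d)) (oner_neq0 _) hz hT).
    by rewrite /elim_cubic dQzE; ring.
  apply: (eq_lincomb2 (k := 1) (k1 := c ^+ 2)
    (k2 := - (6%:R * a * c * X + 3%:R * b * c + (c * X - d) * (12%:R * X ^+ 2 - 3%:R * a + c * Z)))
    (oner_neq0 _) hw hT).
  by rewrite /elim_quintic dQwE; ring.
- case=> X [hP hQ]; exists X, ((12%:R * X ^+ 2 - 3%:R * a) / c).
  rewrite /chart_singular dQxE dQzE dQwE; split.
  + by field.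
  + by apply: (eq_lincomb1 (k := c) (k1 := 1) c_neq0 hP); rewrite /elim_cubic; field.
  + apply: (eq_lincomb1 (k := c ^+ 2) (k1 := 1) (expf_neq0 _ c_neq0) hQ).
    by rewrite /elim_quintic; field.
Qed.

Lemma chart_singular_c0 : c = 0 -> d != 0 ->
  (exists X Z, chart_singular X Z) <-> exists X, 4%:R * X ^+ 2 = a /\ (8%:R * X ^+ 3 + b) ^+ 2 = d.
Proof.
move=> c0 d_neq0; split.
- case=> X [Z [hx hz hw]].
  have ha : 4%:R * X ^+ 2 = a.
    have Z3_neq0 : 3%:R * Z != 0 by rewrite mulf_neq0 ?natr_neq0 ?(chart_Z_neq0 hw).
    by apply: (eq_lincomb1 (k := 3%:R * Z) (k1 := -1) Z3_neq0 hx); rewrite dQxE c0; ring.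
  have hdZ : d * Z = 8%:R * X ^+ 3 + b.
    by apply: (eq_lincomb2 (k := 1) (k1 := -1) (k2 := - (3%:R * X)) (oner_neq0 _) hz ha);
      rewrite dQzE c0; ring.
  exists X; split => //.
  apply: (eq_lincomb3 (k := 2%:R) (k1 := d) (k2 := d * Z - 2%:R * (8%:R * X ^+ 3 + b))
    (k3 := 6%:R * X * (d * Z)) (natr_neq0 1) hw hdZ ha).
  by rewrite dQwE c0; ring.
- case=> X [ha hd].
  have V_neq0 : 8%:R * X ^+ 3 + b != 0.
    by apply: contraNneq d_neq0; rewrite -hd => ->; rewrite expr0n.
  exists X, (8%:R * X ^+ 3 + b)^-1.
  by rewrite /chart_singular dQxE dQzE dQwE c0 -ha -hd; split; field.
Qed.

End QuarticSurface.

Lemma cubic_vieta (F : closedFieldType) (A B D : F) : exists r1 r2 r3 : F,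
  [/\ r1 + r2 + r3 = - A, r1 * r2 + r1 * r3 + r2 * r3 = B & r1 * r2 * r3 = - D].
Proof.
have [r1] := @solve_monicpoly F 3
  (fun i => if i == 0%N then - D else if i == 1%N then - B else - A) isT.
rewrite !big_ord_recr big_ord0 /= => h1.
(* r2 is a root of the cofactor of X - r1. *)
have [r2] := @solve_monicpoly F 2
  (fun i => if i == 0%N then - (B + r1 * (A + r1)) else - (A + r1)) isT.
rewrite !big_ord_recr big_ord0 /= => h2.
exists r1, r2, (- A - r1 - r2); split; first by ring.
  by apply: (eq_lincomb1 (k := 1) (k1 := -1) (oner_neq0 _) h2); ring.
by apply: (eq_lincomb2 (k := 1) (k1 := - r1) (k2 := 1) (oner_neq0 _) h2 h1); ring.
Qed.

(* Vieta for elim_cubic, with its roots written 3 u1, 3 u2, 3 u3 to keep the coefficients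
   integral. *)
Lemma elim_cubic_roots (C : numClosedFieldType) (a b c d : C) : c != 0 ->
  exists u1 u2 u3 : C,
  [/\ a = - (60%:R * (u1 * u2 + u1 * u3 + u2 * u3)),
      b = 900%:R * (u1 + u2 + u3) * (u1 * u2 + u1 * u3 + u2 * u3) - 540%:R * (u1 * u2 * u3)
    & d = 5%:R * c * (u1 + u2 + u3)].
Proof.
move=> c_neq0.
have [r1 [r2 [r3 [h1 h2 h3]]]] := cubic_vieta (- (12%:R * d) / (20%:R * c))
  (- (3%:R * a * c) / (20%:R * c)) ((b * c + 3%:R * a * d) / (20%:R * c)).
exists (r1 / 3%:R), (r2 / 3%:R), (r3 / 3%:R).
have ha : a = - (60%:R * (r1 / 3%:R * (r2 / 3%:R) + r1 / 3%:R * (r3 / 3%:R)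
                           + r2 / 3%:R * (r3 / 3%:R))).
  by apply: (eq_lincomb1 (k := 1) (k1 := 20%:R / 3%:R) (oner_neq0 _) h2); field.
have hd : d = 5%:R * c * (r1 / 3%:R + r2 / 3%:R + r3 / 3%:R).
  by apply: (eq_lincomb1 (k := 1) (k1 := - (5%:R * c / 3%:R)) (oner_neq0 _) h1); field.
split=> //.
apply: (eq_lincomb1 (k := 1) (k1 := 20%:R) (oner_neq0 _) h3).
by rewrite [in RHS]ha [in RHS]hd; field.
Qed.

Lemma elim_resultant (C : numFieldType) (a b c d u1 u2 u3 : C) :
  a = - (60%:R * (u1 * u2 + u1 * u3 + u2 * u3)) ->
  b = 900%:R * (u1 + u2 + u3) * (u1 * u2 + u1 * u3 + u2 * u3) - 540%:R * (u1 * u2 * u3) ->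
  d = 5%:R * c * (u1 + u2 + u3) ->
  3125%:R * (elim_quintic a b c d (3%:R * u1) * elim_quintic a b c d (3%:R * u2)
             * elim_quintic a b c d (3%:R * u3)) + 8%:R * D4 a b c d = 0.
Proof. by move=> -> -> ->; rewrite /elim_quintic /D4; ring. Qed.

Lemma elim_common_root_iff_D4 (C : numClosedFieldType) (a b c d : C) : c != 0 ->
  (exists X, elim_cubic a b c d X = 0 /\ elim_quintic a b c d X = 0) <-> D4 a b c d = 0.
Proof.
move=> c_neq0; have [u1 [u2 [u3 [ha hb hd]]]] := elim_cubic_roots a b d c_neq0.
have resultant := elim_resultant ha hb hd.
have cubicE X : elim_cubic a b c d X
    = 20%:R * c * ((X - 3%:R * u1) * (X - 3%:R * u2) * (X - 3%:R * u3)).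
  by rewrite /elim_cubic ha hb hd; ring.
set Q := elim_quintic a b c d in resultant *; split.
- case=> X [hP hQ].
  have Q_prod0 : Q (3%:R * u1) * Q (3%:R * u2) * Q (3%:R * u3) = 0.
    move/eqP: hP; rewrite cubicE !mulf_eq0 (negbTE (natr_neq0 19)) (negbTE c_neq0).
    rewrite /= !subr_eq0.
    by case/orP => [/orP[]|] /eqP X_eq; rewrite -X_eq hQ; ring.
  move/eqP: resultant; rewrite Q_prod0 mulr0 add0r mulf_eq0 (negbTE (natr_neq0 7)) /=.
  exact: eqP.
- move=> D4_0; move/eqP: resultant; rewrite D4_0 mulr0 addr0.
  rewrite !mulf_eq0 (negbTE (natr_neq0 3124)) /=.
  case/orP => [/orP[]|] /eqP Q0; [exists (3%:R * u1) | exists (3%:R * u2) | exists (3%:R * u3)];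
    by rewrite cubicE Q0 subrr; split; ring.
Qed.

Lemma D4_c0_factor (C : fieldType) (e b d : C) :
  D4 (4%:R * e ^+ 2) b 0 d =
  (2 ^ 4 * 3 ^ 6)%:R * d ^+ 3 * (((8%:R * e ^+ 3 + b) ^+ 2 - d) * ((b - 8%:R * e ^+ 3) ^+ 2 - d)).
Proof. by rewrite /D4; ring. Qed.

Lemma c0_system_iff_D4 (C : numClosedFieldType) (a b d : C) : d != 0 ->
  (exists X, 4%:R * X ^+ 2 = a /\ (8%:R * X ^+ 3 + b) ^+ 2 = d) <-> D4 a b 0 d = 0.
Proof.
move=> d_neq0.
have [e <-] : exists e, 4%:R * e ^+ 2 = a.
  by exists (sqrtC a / 2%:R); rewrite expr_div_n sqrtCK; field; rewrite ?pnatr_eq0.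
rewrite D4_c0_factor; split.
- case=> X [hX hV].
  have : (X - e) * (X + e) = 0.
    by apply: (eq_lincomb1 (k := 4%:R) (k1 := 1) (natr_neq0 3) hX); ring.
  move/eqP; rewrite mulf_eq0 subr_eq0 addr_eq0 => /orP[] /eqP X_eq; rewrite -hV X_eq; ring.
- move/eqP; rewrite !mulf_eq0 (negbTE d_neq0) pnatr_eq0 /= !subr_eq0.
  case/orP => /eqP hV; [exists e | exists (- e)]; split; rewrite -?hV; ring.
Qed.

Theorem mainTheorem4 (C : numClosedFieldType) (a b c d : C)
  (hcd : c != 0 \/ d != 0) :
  (exists x y z w : C,
      singular_rep a b c d x y z w /\
      ~ is_P0100 x y z w /\ ~ is_P0010 x y z w)
  <-> D4 a b c d = 0.
Proof.
apply: iff_trans (singular_off_special_iff_chart a b c d) _.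
have [c0 | c_neq0] := eqVneq c 0.
- have d_neq0 : d != 0 by case: hcd => //; rewrite c0 eqxx.
  subst c; exact: iff_trans (chart_singular_c0 a b erefl d_neq0) (c0_system_iff_D4 a b d_neq0).
- exact: iff_trans (chart_singular_elim a b d c_neq0) (elim_common_root_iff_D4 a b d c_neq0).
Qed.
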